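(* Let $\tau\in(0,1)$, $(\beta,\gamma,\kappa,\upsilon,C_S,C_{\mathrm{App}})\in(0,1]\times(0,\infty)^2\times(0,1)\times[1,\infty)^2$. Let $P\in\mathcal P_{\mathrm{H\ddot ol}}(\beta,C_S)\cap\mathcal P_{\mathrm{App}}(\mathcal A_{\mathrm{rect}},\tau,\kappa,\gamma,C_{\mathrm{App}})$ be a distribution on $\mathbb R^d\times[0,1]$ with regression function $\eta$ and Lebesgue absolutely continuous marginal $\mu$ having a continuous density $f_\mu$. Suppose $\mathcal X_\tau(\eta)\subseteq\mathcal R_\upsilon(\mu)$, $\mu(\eta^{-1}((\tau,1]))>0$ and $\eta^{-1}(\{\tau\})\neq\emptyset$. Then $\beta\gamma(\kappa-1)\le d\kappa$.
   Context: $\eta(x)=\mathbb E(Y\mid X=x)$; $\mathcal X_c(f):=\{x:f(x)\ge c\}$; $\bar B_\infty,B_\infty$: closed/open sup-norm balls. $\mathcal P_{\mathrm{H\ddot ol}}(\beta,C_S)$ (for $\beta\in(0,1]$): $|\eta(x')-\eta(x)|\le C_S\|x'-x\|^\beta_\infty$ for all $x,x'$. $M_\tau:=\sup\{\mu(A):A\in\mathcal A_{\mathrm{rect}},A\subseteq\mathcal X_\tau(\eta)\}$, with $\mathcal A_{\mathrm{rect}}$ the compact axis-aligned hyper-rectangles. Lower density $\omega(x):=\inf_{r\in(0,1)}\mu(\bar B_\infty(x,r))/r^d$. $\mathcal P_{\mathrm{App}}(\mathcal A_{\mathrm{rect}},\tau,\kappa,\gamma,C_{\mathrm{App}})$: $\sup\{\mu(A):A\in\mathcal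 A_{\mathrm{rect}},A\subseteq\mathcal X_\xi(\omega)\cap\mathcal X_{\tau+\Delta}(\eta)\}\ge M_\tau-C_{\mathrm{App}}(\xi^\kappa+\Delta^\gamma)$ for all $\xi,\Delta>0$. $\mathcal R_\upsilon(\mu):=\bigcap_{r\in(0,1)}\{x:\mu(B_\infty(x,r))\ge\upsilon r^d\sup_{x'\in B_\infty(x,(1+\upsilon)r)}f_\mu(x')\}$. *)

From HB Require Import structures.
From mathcomp Require Import all_boot all_order all_algebra.
From mathcomp Require Import all_classical all_reals all_analysis.
Set Implicit Arguments. Unset Strict Implicit. Unset Printing Implicit Defensive.
Import Order.TTheory GRing.Theory Num.Theory.
Import numFieldNormedType.Exports.
Local Open Scope classical_set_scope.
Local Open Scope ring_scope.

Section Defs.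
Variable R : realType.

Definition supnorm (d : nat) (x : 'rV[R]_d) : R :=
  \big[Num.max/0]_(i < d) `|x ord0 i|.

Definition cball (d : nat) (x : 'rV[R]_d) (r : R) : set 'rV[R]_d :=
  [set y | supnorm (y - x) <= r].
Definition oball (d : nat) (x : 'rV[R]_d) (r : R) : set 'rV[R]_d :=
  [set y | supnorm (y - x) < r].

Definition is_rect (d : nat) (A : set 'rV[R]_d) : Prop :=
  exists a b : 'rV[R]_d, A = [set x | forall i, a ord0 i <= x ord0 i <= b ord0 i].

(* ---------- d-dimensional Lebesgue integral (iterated, Tonelli) ---------- *)
Definition scons (t : R) (x : nat -> R) : nat -> R :=
  fun i => if i is j.+1 then x j else t.

Fixpoint iint (n : nat) (g : (nat -> R) -> \bar R) : \bar R :=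
  match n with
  | 0 => g (fun _ => 0)
  | n'.+1 => (\int[lebesgue_measure]_t iint n' (fun x => g (scons t x)))%E
  end.

Definition leb_int (d : nat) (h : 'rV[R]_d -> \bar R) : \bar R :=
  iint d (fun x => h (\row_(i < d) x (nat_of_ord i))).

Definition dmeasure (d : nat) (f : 'rV[R]_d -> R) (A : set 'rV[R]_d) : \bar R :=
  leb_int (fun x => ((f x)%:E * (\1_A x)%:E)%E).

Definition superlevel (d : nat) (g : 'rV[R]_d -> R) (c : R) : set 'rV[R]_d :=
  [set x | c <= g x].

Definition holder (d : nat) (eta : 'rV[R]_d -> R) (beta CS : R) : Prop :=
  forall x x', `|eta x' - eta x| <= CS * powR (supnorm (x' - x)) beta.

Definition Mtau (d : nat) (mu : set 'rV[R]_d -> \bar R) (eta : 'rV[R]_d -> R)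
  (tau : R) : \bar R :=
  ereal_sup [set mu A | A in [set A | is_rect A /\ A `<=` superlevel eta tau]].

Definition lower_density (d : nat) (mu : set 'rV[R]_d -> \bar R) (x : 'rV[R]_d)
  : \bar R :=
  ereal_inf [set (mu (cball x r) * ((r ^+ d)^-1)%:E)%E | r in [set r : R | 0 < r < 1]].

Definition approx_cond (d : nat) (mu : set 'rV[R]_d -> \bar R) (eta : 'rV[R]_d -> R)
  (tau kappa gamma CApp : R) : Prop :=
  forall xi Delta : R, 0 < xi -> 0 < Delta ->
    (ereal_sup [set mu A | A in [set A | is_rect A /\
        A `<=` ([set x | (xi%:E <= lower_density mu x)%E]
                `&` superlevel eta (tau + Delta))]]
     >= Mtau mu eta tau - (CApp * (powR xi kappa + powR Delta gamma))%:E)%E.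

Definition regular_set (d : nat) (mu : set 'rV[R]_d -> \bar R) (f : 'rV[R]_d -> R)
  (ups : R) : set 'rV[R]_d :=
  \bigcap_(r in [set r : R | 0 < r < 1])
    [set x | ((ups * r ^+ d)%:E *
               ereal_sup [set (f x')%:E | x' in oball x ((1 + ups) * r)]
             <= mu (oball x r))%E].

End Defs.

(* Suppose beta gamma (kappa - 1) > d kappa.  Take a rectangle A inside
   X_{tau + Delta}(eta) on which the lower density is at least xi, with
   Delta = C_S rho^beta.  By Hölder continuity its rho-enlargement A' is still a
   rectangle inside X_tau(eta), so mu(A) + mu(Q) <= M_tau, where Q is the ball of
   radius rho/2 at the corner b + rho/2 of A'.  Regularity at the centre of Q and
   the lower density bound at the corner b of A give
   mu(Q) >= ups (rho/2)^d xi / 2^d.  Hence the approximation error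
   C_App (xi^kappa + Delta^gamma) cannot be below both this margin and M_tau.
   For xi = t^(beta gamma) and rho = t^kappa the error is of order
   t^(beta gamma kappa) and the margin of order t^(beta gamma + d kappa), which
   is larger for small t by the assumption. *)

From HB Require Import structures.
From mathcomp Require Import all_boot all_order all_algebra.
From mathcomp Require Import all_classical all_reals all_analysis.
From mathcomp Require Import ring lra.
Import Order.TTheory GRing.Theory Num.Theory.
Import numFieldNormedType.Exports.
Local Open Scope classical_set_scope.
Local Open Scope ring_scope.

Section nonneg_integral.
Context {dT : measure_display} {T : measurableType dT} {R : realType}.
Variable mu : {measure set T -> \bar R}.
Local Open Scope ereal_scope.
Import HBNNSimple.

Lemma ge_ereal_supD (X Y : set (\bar R)) (s : \bar R) :
  X !=set0 -> Y !=set0 -> (forall x, X x -> 0 <= x) -> (forall y, Y y -> 0 <= y) ->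
  (forall x y, X x -> Y y -> x + y <= s) -> ereal_sup X + ereal_sup Y <= s.
Proof.
move=> [x0 Xx0] [y0 Yy0] X0 Y0 XYs.
have s0 : 0 <= s := le_trans (adde_ge0 (X0 _ Xx0) (Y0 _ Yy0)) (XYs _ _ Xx0 Yy0).
have supY0 : 0 <= ereal_sup Y := le_trans (Y0 _ Yy0) (ereal_sup_ubound Yy0).
case: s s0 XYs => [s| |] s0 XYs; [|by rewrite leey|by []].
have Xfin x : X x -> x \is a fin_num.
  move=> Xx; rewrite ge0_fin_numE ?X0//.
  exact: le_lt_trans (leeDl x (Y0 _ Yy0)) (le_lt_trans (XYs _ _ Xx Yy0) (ltry _)).
have supY_le x : X x -> ereal_sup Y <= s%:E - x.
  by move=> Xx; apply: ge_ereal_sup => y Yy; rewrite leeBrDl ?Xfin// XYs.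
have supYfin : ereal_sup Y \is a fin_num.
  rewrite ge0_fin_numE//; apply: le_lt_trans (supY_le _ Xx0) _.
  by rewrite -(fineK (Xfin _ Xx0)) -EFinB ltry.
rewrite -leeBrDr//; apply: ge_ereal_sup => x Xx.
by rewrite leeBrDl// addeC -leeBrDl ?Xfin// supY_le.
Qed.

(* No measurability is assumed below: the integral of a nonnegative function is
   then the supremum of the integrals of simple functions below it, which is
   monotone and superadditive but not necessarily additive. *)
Lemma ge0_le_integralT (g1 g2 : T -> \bar R) :
  (forall t, 0 <= g1 t) -> (forall t, g1 t <= g2 t) ->
  \int[mu]_t g1 t <= \int[mu]_t g2 t.
Proof.
move=> g10 g12; have g20 t : 0 <= g2 t by apply: le_trans (g12 t).
rewrite !ge0_integralTE//; apply: ereal_sup_le => _ [h hg1 <-].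
by exists h => //= x; apply: le_trans (g12 x).
Qed.

Lemma ge0_integralT_superadditive (g1 g2 : T -> \bar R) :
  (forall t, 0 <= g1 t) -> (forall t, 0 <= g2 t) ->
  \int[mu]_t g1 t + \int[mu]_t g2 t <= \int[mu]_t (g1 t + g2 t).
Proof.
move=> g10 g20; rewrite !ge0_integralTE//; last by move=> t; rewrite adde_ge0.
apply: ge_ereal_supD.
- by exists (sintegral mu (@nnsfun0 _ _ R)), nnsfun0 => //= x; rewrite g10.
- by exists (sintegral mu (@nnsfun0 _ _ R)), nnsfun0 => //= x; rewrite g20.
- by move=> _ [h _ <-]; exact: sintegral_ge0.
- by move=> _ [h _ <-]; exact: sintegral_ge0.
move=> _ _ [h1 h1g <-] [h2 h2g <-].
rewrite -sintegralD; apply: ereal_sup_ubound; exists (add_nnsfun h1 h2) => //= x.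
by rewrite EFinD leeD.
Qed.

End nonneg_integral.

Section iterated_integral.
Context {R : realType}.
Local Open Scope ereal_scope.
Implicit Types g : (nat -> R) -> \bar R.

Lemma iint_ge0 n g : (forall x, 0 <= g x) -> 0 <= iint n g.
Proof.
elim: n g => [|n IH] g g0 /=; first exact: g0.
by apply: integral_ge0 => t _; apply: IH.
Qed.

Lemma iint_le n g1 g2 : (forall x, 0 <= g1 x) -> (forall x, g1 x <= g2 x) ->
  iint n g1 <= iint n g2.
Proof.
elim: n g1 g2 => [|n IH] g1 g2 g10 g12 /=; first exact: g12.
by apply: ge0_le_integralT => t; [exact: iint_ge0 | exact: IH].
Qed.

Lemma iint_superadditive n g1 g2 : (forall x, 0 <= g1 x) -> (forall x, 0 <= g2 x) ->
  iint n g1 + iint n g2 <= iint n (fun x => g1 x + g2 x).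
Proof.
elim: n g1 g2 => [|n IH] g1 g2 g10 g20 //=.
apply: le_trans; first by apply: ge0_integralT_superadditive => t; exact: iint_ge0.
apply: ge0_le_integralT => t; last exact: IH.
by rewrite adde_ge0 ?iint_ge0.
Qed.

Lemma iint_eq0 n g : (forall x, g x = 0) -> iint n g = 0.
Proof.
elim: n g => [|n IH] g g0 /=; first exact: g0.
by apply: integral0_eq => t _; apply: IH.
Qed.

Lemma integral_indic_itv (k a b : R) : (0 <= k)%R -> (a <= b)%R ->
  \int[lebesgue_measure]_t (k * \1_`[a, b] t)%:E = (k * (b - a))%:E.
Proof.
move=> k0 ab.
have := @integralZl_indic _ _ _ lebesgue_measure setT measurableT (fun=> `[a, b]%classic) k.
rewrite /= => -> //; last by move=> /lt_le_trans/(_ k0); rewrite ltxx.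
rewrite integral_indic// setIT.
have := @lebesgue_measure_itv R `[a, b]; rewrite /= lte_fin => ->.
case: ltP => [_|ba]; first by rewrite -EFinB -EFinM.
have -> : b = a by apply/le_anti; rewrite ba ab.
by rewrite subrr mulr0 mule0.
Qed.

Lemma iint_box n (a b : nat -> R) (s : R) : (0 <= s)%R -> (forall i, a i <= b i)%R ->
  iint n (fun x => (s * \prod_(i < n) \1_`[a i, b i] (x i))%:E) =
  (s * \prod_(i < n) (b i - a i))%:E.
Proof.
elim: n a b s => [|n IH] a b s s0 ab /=; first by rewrite !big_ord0.
transitivity (\int[lebesgue_measure]_t
    ((s * \prod_(i < n) (b i.+1 - a i.+1)) * \1_`[a 0, b 0] t)%:E).
  apply: eq_integral => t _.
  under eq_fun => x do rewrite big_ord_recl /= mulrA.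
  rewrite (IH (a \o succn) (b \o succn)) ?mulr_ge0 //; last by move=> i; exact: ab.
  by congr (_%:E); rewrite /=; ring.
rewrite integral_indic_itv ?ab //; last first.
  by rewrite mulr_ge0 // prodr_ge0 // => i _; rewrite subr_ge0.
by rewrite big_ord_recl; congr (_%:E); ring.
Qed.

End iterated_integral.

Section sup_norm_balls.
Context {R : realType} {d : nat}.
Implicit Types (x z : 'rV[R]_d) (r : R).

Lemma supnorm_ge0 x : 0 <= supnorm x.
Proof. exact: bigmax_ge_id. Qed.

Lemma supnorm_leP x r : 0 <= r -> supnorm x <= r <-> forall i, `|x ord0 i| <= r.
Proof. by move=> r0; split => [/bigmax_leP[_ + i] | ?]; [apply | exact/bigmax_leP]. Qed.

Lemma supnorm_ltP x r : 0 < r -> supnorm x < r <-> forall i, `|x ord0 i| < r.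
Proof. by move=> r0; split => [/bigmax_ltP[_ + i] | ?]; [apply | exact/bigmax_ltP]. Qed.

Lemma cball_center z r : 0 <= r -> cball z r z.
Proof. by move=> r0; apply/supnorm_leP => // i; rewrite subrr mxE normr0. Qed.

Lemma oball_center z r : 0 < r -> oball z r z.
Proof. by move=> r0; apply/supnorm_ltP => // i; rewrite subrr mxE normr0. Qed.

Lemma oball_sub_cball z r : oball z r `<=` cball z r.
Proof. by move=> x; exact: ltW. Qed.

End sup_norm_balls.

Arguments supnorm_leP {R d x r}.
Arguments supnorm_ltP {R d x r}.

Section boxes.
Context {R : realType} {d : nat}.
Implicit Types (a b x z : 'rV[R]_d) (r : R).

Definition box a b : set 'rV[R]_d := [set x | forall i, a ord0 i <= x ord0 i <= b ord0 i].

Lemma is_rect_box a b : is_rect (box a b).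
Proof. by exists a, b. Qed.

Lemma box_neq0 a b : box a b !=set0 -> forall i, a ord0 i <= b ord0 i.
Proof. by move=> [x abx] i; have /andP[/le_trans] := abx i; apply. Qed.

Lemma cball_box z r : 0 <= r -> cball z r = box (z - const_mx r) (z + const_mx r).
Proof.
move=> r0; apply/seteqP; split => x.
  move=> /(supnorm_leP r0) zx i; move: (zx i); rewrite !mxE ler_norml.
  by move=> /andP[? ?]; apply/andP; split; lra.
move=> zx; apply/(supnorm_leP r0) => i; move: (zx i); rewrite !mxE ler_norml.
by move=> /andP[? ?]; apply/andP; split; lra.
Qed.

Lemma box_sub_enlarged a b r : 0 <= r ->
  box a b `<=` box (a - const_mx r) (b + const_mx r).
Proof.
by move=> r0 x abx i; move: (abx i); rewrite !mxE => /andP[? ?]; apply/andP; split; lra.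
Qed.

Lemma enlarged_box_near a b r : (forall i, a ord0 i <= b ord0 i) -> 0 <= r ->
  forall x, box (a - const_mx r) (b + const_mx r) x ->
  exists2 q, box a b q & supnorm (x - q) <= r.
Proof.
move=> ab r0 x abx.
exists (\row_i Num.min (Num.max (x ord0 i) (a ord0 i)) (b ord0 i)) => [i|].
  by rewrite mxE le_min le_max lexx orbT ab ge_min lexx orbT.
apply/(supnorm_leP r0) => i; move: (abx i) (ab i); rewrite !mxE ler_norml.
by rewrite minEle maxEle; do 2 case: ifP => /=; move=> *; apply/andP; split; lra.
Qed.

Lemma corner_oball_sub_enlarged a b r : (forall i, a ord0 i <= b ord0 i) -> 0 < r ->
  oball (b + const_mx (r / 2)) (r / 2) `<=` box (a - const_mx r) (b + const_mx r).
Proof.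
move=> ab r0; have r20 : 0 < r / 2 by lra.
move=> x /(supnorm_ltP r20) bx i; move: (ab i) (bx i); rewrite !mxE ltr_norml.
by move=> ? /andP[? ?]; apply/andP; split; lra.
Qed.

Lemma box_corner_oball_disjoint a b r (i : 'I_d) :
  box a b `&` oball (b + const_mx (r / 2)) (r / 2) = set0.
Proof.
apply/seteqP; split => // x [/(_ i) /andP[_ xb]].
move=> /[dup] /(le_lt_trans (supnorm_ge0 _)) r20 /(supnorm_ltP r20) /(_ i).
by rewrite !mxE ltr_norml => /andP[? ?]; lra.
Qed.

Lemma cball_sub_corner_oball b u r : 0 < u -> 0 < r ->
  cball b (u * r / 4) `<=` oball (b + const_mx (r / 2)) ((1 + u) * (r / 2)).
Proof.
move=> u0 r0; have ur0 : 0 < u * r by rewrite mulr_gt0.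
have ur40 : 0 <= u * r / 4 by lra.
move=> x /(supnorm_leP ur40) bx; apply/supnorm_ltP => [|i]; first by rewrite mulr_gt0 //; lra.
by move: (bx i); rewrite !mxE ler_norml ltr_norml => /andP[? ?]; apply/andP; split; lra.
Qed.

End boxes.

Arguments box_neq0 {R d a b}.
Arguments enlarged_box_near {R d a b r}.

Definition row_coord {R : realType} {d : nat} (a : 'rV[R]_d) (i : nat) : R :=
  if insub i is Some j then a ord0 j else 0.

Lemma row_coordE (R : realType) d (a : 'rV[R]_d) (j : 'I_d) : row_coord a j = a ord0 j.
Proof. by rewrite /row_coord valK. Qed.

Lemma indic_box_row (R : realType) d (a b : 'rV[R]_d) (x : nat -> R) :
  \1_(box a b) (\row_(i < d) x i) =
  \prod_(i < d) \1_`[row_coord a i, row_coord b i] (x i) :> R.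
Proof.
rewrite indicE; case: (boolP (_ \in _)) => [|/negP abx].
  rewrite inE => abx; apply/esym/big1 => i _; rewrite indicE mem_set //=.
  by move: (abx i); rewrite !row_coordE mxE in_itv.
have [i /negP] : exists i, ~ (a ord0 i <= (\row_(i < d) x i) ord0 i <= b ord0 i).
  by apply/existsNP => abx'; apply: abx; rewrite inE.
rewrite mxE => xi; rewrite (bigD1 i) //= indicE memNset ?mul0r //= in_itv /=.
by rewrite !row_coordE; apply/negP.
Qed.

Section density_measure.
Context {R : realType} {d : nat} {f : 'rV[R]_d -> R}.
Hypothesis f0 : forall x, 0 <= f x.
Local Notation mu := (dmeasure f).
Implicit Types A B C : set 'rV[R]_d.
Local Open Scope ereal_scope.

Lemma le_dmeasure A B : A `<=` B -> mu A <= mu B.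
Proof.
move=> AB; apply: iint_le => x; first by rewrite -EFinM lee_fin mulr_ge0.
rewrite -!EFinM lee_fin ler_wpM2l // !indicE.
by case: (boolP (_ \in A)) => [/set_mem/AB/mem_set -> | _] //; case: (_ \in B).
Qed.

Lemma dmeasure_disjoint_le A B C : A `<=` C -> B `<=` C -> A `&` B = set0 ->
  mu A + mu B <= mu C.
Proof.
move=> AC BC AB0; apply: le_trans.
  by apply: iint_superadditive => x; rewrite -EFinM lee_fin mulr_ge0.
apply: iint_le => x.
  by rewrite -!EFinM -EFinD lee_fin addr_ge0 ?mulr_ge0.
rewrite -!EFinM -EFinD lee_fin -mulrDr ler_wpM2l // !indicE.
set y := \row_(i < d) x i.
have [Ay|nAy] := boolP (y \in A); have [By|nBy] := boolP (y \in B).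
- by move: (Ay) (By) => /set_mem ? /set_mem ?; have : (A `&` B) y by []; rewrite AB0.
- by rewrite (mem_set (AC _ (set_mem Ay))) addr0.
- by rewrite (mem_set (BC _ (set_mem By))) add0r.
- by rewrite addr0; case: (_ \in C).
Qed.

Lemma dmeasure_eq0 A : (forall x, A x -> f x = 0%R) -> mu A = 0.
Proof.
move=> fA0; apply: iint_eq0 => x; rewrite indicE.
by case: (boolP (_ \in A)) => [/set_mem/fA0 ->|_]; rewrite ?mul0e ?mule0.
Qed.

Lemma dmeasure_gt0 A : 0 < mu A -> exists2 x, A x & (0 < f x)%R.
Proof.
apply: contraPP => /forall2NP fA0; rewrite dmeasure_eq0 ?ltxx // => x Ax.
by have [//|/negP] := fA0 x; rewrite lt_def f0 andbT negbK => /eqP.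
Qed.

Lemma dmeasure_box_le a b (s : R) : box a b !=set0 ->
  (forall x, box a b x -> (f x <= s)%R) ->
  mu (box a b) <= (s * \prod_(i < d) (b ord0 i - a ord0 i))%:E.
Proof.
move=> abx fs; have ab := box_neq0 abx.
have s0 : (0 <= s)%R by have [x /fs] := abx; apply: le_trans.
have ab' i : (row_coord a i <= row_coord b i)%R.
  by rewrite /row_coord; case: insub => // j; exact: ab.
under eq_bigr => i _ do rewrite -!row_coordE.
rewrite -iint_box // /dmeasure /leb_int; apply: iint_le => x.
  by rewrite -EFinM lee_fin mulr_ge0.
rewrite -!EFinM lee_fin -indic_box_row indicE.
by case: (boolP (_ \in _)) => [/set_mem/fs|]; rewrite ?mulr1 ?mulr0.
Qed.

Lemma dmeasure_cball_le z (r s : R) : (0 <= r)%R ->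
  (forall x, cball z r x -> (f x <= s)%R) -> mu (cball z r) <= (s * (r *+ 2) ^+ d)%:E.
Proof.
move=> r0; rewrite cball_box // => fs.
have zr : box (z - const_mx r) (z + const_mx r) !=set0.
  by exists z; rewrite -cball_box //; exact: cball_center.
apply: le_trans (dmeasure_box_le _ _ _ zr fs) _.
rewrite (eq_bigr (fun=> r *+ 2)%R) ?prodr_const ?card_ord // => i _.
by rewrite !mxE mulr2n; ring.
Qed.

Lemma lower_density_le_sup (z : 'rV[R]_d) (xi r : R) : (0 < r < 1)%R ->
  xi%:E <= lower_density (dmeasure f) z ->
  (xi / 2 ^+ d)%:E <= ereal_sup [set (f x)%:E | x in cball z r].
Proof.
move=> /andP[r0 r1] xi_le; have zr := cball_center z r (ltW r0).
case Hs : ereal_sup => [s| |]; last 2 first.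
- by rewrite leey.
- have : (f z)%:E <= -oo by rewrite -Hs; apply: ereal_sup_ubound; exists z.
  by rewrite leNgt ltNye.
have fs x : cball z r x -> (f x <= s)%R.
  by move=> zx; rewrite -lee_fin -Hs; apply: ereal_sup_ubound; exists x.
have rd0 : (0 < r ^+ d)%R by rewrite exprn_gt0.
have : xi%:E <= (s * (r *+ 2) ^+ d)%:E * ((r ^+ d)^-1)%:E.
  apply: le_trans xi_le (le_trans (ereal_inf_lbound _) _); first by exists r => //; apply/andP.
  by apply: lee_wpmul2r; [rewrite lee_fin invr_ge0 ltW | exact: dmeasure_cball_le (ltW r0) fs].
rewrite -EFinM !lee_fin -[(r *+ 2)%R]mulr_natr exprMn mulrA mulrAC mulfK ?gt_eqF //.
by rewrite ler_pdivrMr ?exprn_gt0.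
Qed.

Lemma Mtau_le_dmeasureT (eta : 'rV[R]_d -> R) (c : R) : Mtau mu eta c <= mu setT.
Proof. by apply: ge_ereal_sup => _ [A _ <-]; exact: le_dmeasure. Qed.

End density_measure.

Section holder_superlevel.
Context {R : realType} {d : nat}.
Variables (eta : 'rV[R]_d -> R) (beta CS : R).
Hypotheses (eta_holder : holder eta beta CS) (beta0 : 0 < beta) (CS0 : 0 <= CS).

Lemma holder_ge (z x : 'rV[R]_d) (r : R) : supnorm (x - z) <= r ->
  eta z - CS * powR r beta <= eta x.
Proof.
move=> zx; have := eta_holder z x; rewrite ler_norml => /andP[+ _].
suff : CS * powR (supnorm (x - z)) beta <= CS * powR r beta by lra.
rewrite ler_wpM2l // (ge0_ler_powR (ltW beta0)) ?nnegrE ?supnorm_ge0 //.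
exact: le_trans (supnorm_ge0 _) zx.
Qed.

Lemma cball_sub_superlevel (z : 'rV[R]_d) (c r : R) :
  CS * powR r beta <= eta z - c -> cball z r `<=` superlevel eta c.
Proof. by move=> rz x /holder_ge; rewrite /superlevel /=; lra. Qed.

Lemma enlarged_box_sub_superlevel (a b : 'rV[R]_d) (c r : R) : box a b !=set0 ->
  0 <= r -> box a b `<=` superlevel eta (c + CS * powR r beta) ->
  box (a - const_mx r) (b + const_mx r) `<=` superlevel eta c.
Proof.
move=> /box_neq0 ab r0 abc x /(enlarged_box_near ab r0)[q /abc qc /holder_ge].
by rewrite /superlevel /= in qc *; lra.
Qed.

End holder_superlevel.

Section powR_exponents.
Context {R : realType}.

Lemma exists_powR_le (a p : R) : 0 < a -> 0 < p ->
  exists2 t : R, 0 < t < 1 & powR t p <= a.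
Proof.
move=> a0 p0; set t := Num.min (1 / 2) (powR a p^-1).
have t0 : 0 < t by rewrite lt_min powR_gt0 // andbT; lra.
exists t; first by rewrite t0 /= gt_min; apply/orP; left; lra.
apply: le_trans (_ : powR (powR a p^-1) p <= a).
  by rewrite (ge0_ler_powR (ltW p0)) ?nnegrE ?powR_ge0 ?ge_min ?lexx ?orbT // ltW.
by rewrite -powRrM mulVf ?gt_eqF // powRr1 // ltW.
Qed.

Lemma exists_powR_dominated (K c m p e : R) : 0 < K -> 0 < c -> 0 < m -> 0 < p -> 0 <= e ->
  exists t : R, [/\ 0 < t < 1, K * powR t (p + e) < c * powR t e & K * powR t (p + e) < m].
Proof.
move=> K0 c0 m0 p0 e0; set cm := Num.min c m.
have cm0 : 0 < cm by rewrite lt_min c0.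
have [cmc cmm] : cm <= c /\ cm <= m by split; rewrite ge_min lexx ?orbT.
have [t /andP[t0 t1] tp] := exists_powR_le _ _ (divr_gt0 cm0 (mulr_gt0 (ltr0Sn _ 1) K0)) p0.
have te0 : 0 < powR t e by rewrite powR_gt0.
have te1 : powR t e <= 1 by rewrite -(powRr0 t); apply: ger_powR => //; rewrite t0 ltW.
have Ktp : K * powR t p <= cm / 2.
  by rewrite mulrC -ler_pdivlMr // -mulrA -invfM.
exists t; rewrite t0 t1 powRD ?(gt_eqF t0) ?implybT //; split => //; nra.
Qed.

Lemma approx_error_powR (CApp CS beta gamma kappa t : R) : 0 <= t -> 0 <= CS ->
  CApp * (powR (powR t (beta * gamma)) kappa + powR (CS * powR (powR t kappa) beta) gamma) =
  CApp * (1 + powR CS gamma) * powR t (beta * gamma * kappa).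
Proof.
move=> t0 CS0; rewrite powRM ?powR_ge0 // -!powRrM.
by rewrite [kappa * _]mulrC; ring.
Qed.

Lemma corner_mass_powR (d : nat) (ups kappa e t : R) : 0 < t ->
  ups * (powR t kappa / 2) ^+ d * (powR t e / 2 ^+ d) =
  ups / 4 ^+ d * powR t (e + kappa * d%:R).
Proof.
move=> t0; rewrite powRD ?(gt_eqF t0) ?implybT // powRrM powR_mulrn ?powR_ge0 //.
rewrite expr_div_n (_ : 4 ^+ d = 2 ^+ d * 2 ^+ d :> R); last first.
  by rewrite -exprMn; congr (_ ^+ _); ring.
by field; rewrite expf_neq0.
Qed.

End powR_exponents.

Section margin.
Context {R : realType} {d : nat} {f eta : 'rV[R]_d -> R} {tau beta CS ups : R}.
Hypotheses (f0 : forall x, 0 <= f x) (beta0 : 0 < beta) (CS0 : 0 < CS).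
Hypotheses (ups0 : 0 < ups) (ups1 : ups < 1).
Hypothesis eta_holder : holder eta beta CS.
Hypothesis eta_regular : superlevel eta tau `<=` regular_set (dmeasure f) f ups.
Local Notation mu := (dmeasure f).
Local Notation M := (Mtau mu eta tau).

Lemma Mtau_gt0 (x1 : 'rV[R]_d) : tau < eta x1 -> 0 < f x1 -> (0 < M)%E.
Proof.
rewrite -subr_gt0 => etax1 fx1.
have [r /andP[r0 r1] rx1] := exists_powR_le _ _ (divr_gt0 etax1 CS0) beta0.
have x1r : cball x1 r `<=` superlevel eta tau.
  by apply: cball_sub_superlevel => //; [exact: ltW | rewrite mulrC -ler_pdivlMr].
apply: lt_le_trans (ereal_sup_ubound _); last first.
  by exists (cball x1 r) => //; split => //; rewrite cball_box ?ltW //; exact: is_rect_box.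
apply: lt_le_trans (le_dmeasure f0 _ _ (oball_sub_cball x1 r)).
apply: lt_le_trans (eta_regular _ (x1r _ (cball_center _ _ (ltW r0))) r _); last first.
  by rewrite /= r0 r1.
apply: lt_le_trans (lee_wpmul2l _ (ereal_sup_ubound _)); last 2 first.
- by rewrite lee_fin mulr_ge0 ?exprn_ge0 ?ltW.
- by exists x1 => //; apply: oball_center; rewrite mulr_gt0 // addr_gt0.
by rewrite -EFinM lte_fin !mulr_gt0 ?exprn_gt0.
Qed.

Lemma corner_oball_mass (b : 'rV[R]_d) (xi rho : R) : 0 < rho <= 1 ->
  (xi%:E <= lower_density mu b)%E -> superlevel eta tau (b + const_mx (rho / 2)) ->
  ((ups * (rho / 2) ^+ d * (xi / 2 ^+ d))%R%:E <=
   mu (oball (b + const_mx (rho / 2)) (rho / 2))%R)%E.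
Proof.
move=> /andP[rho0 rho1] xib /eta_regular yreg.
apply: le_trans (yreg (rho / 2) _); last by rewrite /=; apply/andP; split; lra.
rewrite EFinM; apply: lee_wpmul2l.
  by rewrite lee_fin mulr_ge0 ?exprn_ge0 ?ltW //; lra.
have urho : 0 < ups * rho / 4 < 1.
  have : ups * rho <= 1 by apply: mulr_ile1 => //; exact: ltW.
  by rewrite divr_gt0 ?mulr_gt0 //=; lra.
apply: le_trans (lower_density_le_sup f0 _ _ _ urho xib) _.
apply: ereal_sup_le => _ [x bx <-]; exists x => //.
exact: cball_sub_corner_oball.
Qed.

(* [i] only witnesses [0 < d]: in dimension 0 the corner ball is the whole space. *)
Lemma rect_margin (i : 'I_d) (A : set 'rV[R]_d) (xi rho : R) :
  is_rect A -> A !=set0 -> 0 < rho <= 1 ->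
  A `<=` [set x | (xi%:E <= lower_density mu x)%E]
         `&` superlevel eta (tau + CS * powR rho beta) ->
  (mu A + (ups * (rho / 2) ^+ d * (xi / 2 ^+ d))%R%:E <= M)%E.
Proof.
move=> [a [b ->]] Ane /[dup] rho01 /andP[rho0 rho1] Asub.
have ab := box_neq0 Ane.
set E := box (a - const_mx rho) (b + const_mx rho).
set Q := oball (b + const_mx (rho / 2)) (rho / 2).
have ES : E `<=` superlevel eta tau.
  by apply: enlarged_box_sub_superlevel => //; [exact: ltW | exact: ltW | move=> x /Asub[]].
have QE : Q `<=` E := corner_oball_sub_enlarged _ _ _ ab rho0.
have bA : box a b b by move=> j; rewrite ab lexx.
apply: le_trans (_ : mu (box a b) + mu Q <= M)%E.
  apply: leeD => //; apply: corner_oball_mass => //; first by have [] := Asub _ bA.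
  by apply/ES/QE/oball_center; lra.
apply: le_trans (dmeasure_disjoint_le f0 _ _ _ (box_sub_enlarged _ _ _ (ltW rho0)) QE
  (box_corner_oball_disjoint _ _ _ i)) _.
by apply: ereal_sup_ubound; exists E => //; split; [exact: is_rect_box | exact: ES].
Qed.

Lemma approx_error_not_small (i : 'I_d) (kappa gamma CApp xi rho Mr : R) :
  approx_cond mu eta tau kappa gamma CApp -> 0 < xi -> 0 < rho <= 1 ->
  M = Mr%:E ->
  CApp * (powR xi kappa + powR (CS * powR rho beta) gamma) <
    ups * (rho / 2) ^+ d * (xi / 2 ^+ d) ->
  CApp * (powR xi kappa + powR (CS * powR rho beta) gamma) < Mr -> False.
Proof.
set B := CApp * _; set L := ups * _ * _ => app xi0 rho01 ME BL BM.
have Delta0 : 0 < CS * powR rho beta by rewrite mulr_gt0 ?powR_gt0 //; case/andP: rho01.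
have := app xi _ xi0 Delta0; rewrite ME -/B -EFinB => appB.
have MLB : ((Num.max (Mr - L) 0)%:E < (Mr - B)%:E)%E.
  by rewrite lte_fin gt_max; apply/andP; split; lra.
have /ereal_sup_gt[_ [A [Arect Asub] <-] muA] := lt_le_trans MLB appB.
have [Ane|A0] := pselect (A !=set0); last first.
  move: muA; rewrite dmeasure_eq0 => [|x Ax]; last by exfalso; apply: A0; exists x.
  by rewrite ltNge lee_fin le_max lexx orbT.
have := rect_margin i A xi rho Arect Ane rho01 Asub.
rewrite ME; apply/negP; rewrite -ltNge.
rewrite -/L -[Mr](subrK L) EFinD lte_leD //.
by apply: le_lt_trans muA; rewrite lee_fin le_max lexx.
Qed.

End margin.

Theorem mainTheorem18 (R : realType) (d : nat)
  (tau beta gamma kappa ups CS CApp : R)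
  (f : 'rV[R]_d -> R) (eta : 'rV[R]_d -> R) :
  0 < tau < 1 ->
  0 < beta <= 1 -> 0 < gamma -> 0 < kappa -> 0 < ups < 1 ->
  1 <= CS -> 1 <= CApp ->
  continuous f -> (forall x, 0 <= f x) -> dmeasure f setT = 1%E ->
  (forall x, 0 <= eta x <= 1) ->
  holder eta beta CS ->
  approx_cond (dmeasure f) eta tau kappa gamma CApp ->
  superlevel eta tau `<=` regular_set (dmeasure f) f ups ->
  (0 < dmeasure f [set x | (tau < eta x <= 1)%R])%E ->
  eta @^-1` [set tau] !=set0 ->
  beta * gamma * (kappa - 1) <= d%:R * kappa.
Proof.
move=> _ /andP[beta0 _] gamma0 kappa0 /andP[ups0 ups1] CS1 CApp1 _ f0 f1 _ eta_holder app
  eta_regular /(dmeasure_gt0 f0)[x1 /andP[etax1 _] fx1] [x0 etax0].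
(* In dimension 0 the space is a single point, where eta would be both tau and > tau. *)
case: d => [|d] in f eta f0 f1 eta_holder app eta_regular x1 etax1 fx1 x0 etax0 *.
  by move: etax1; rewrite (thinmx0 x1) -(thinmx0 x0) etax0 ltxx.
have CS0 : 0 < CS by lra.
pose M := Mtau (dmeasure f) eta tau.
have M0 : (0 < M)%E := Mtau_gt0 f0 beta0 CS0 ups0 eta_holder eta_regular x1 etax1 fx1.
have M1 : (M <= 1)%E by rewrite -f1 Mtau_le_dmeasureT.
have ME : M = (fine M)%:E by rewrite fineK // ge0_fin_numE ?(ltW M0) // (le_lt_trans M1) ?ltry.
have Mr0 : 0 < fine M by rewrite -lte_fin -ME.
rewrite leNgt; apply/negP => beta_gamma_large.
have p0 : 0 < beta * gamma * kappa - (beta * gamma + kappa * d.+1%:R) by lra.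
have K0 : 0 < CApp * (1 + powR CS gamma) by rewrite mulr_gt0 ?addr_gt0 ?powR_gt0 //; lra.
have c0 : 0 < ups / 4 ^+ d.+1 by rewrite divr_gt0 ?exprn_gt0.
have e0 : 0 <= beta * gamma + kappa * d.+1%:R by rewrite addr_ge0 ?mulr_ge0 ?ltW.
have [t [/andP[t0 t1] tK tM]] := exists_powR_dominated _ _ _ _ _ K0 c0 Mr0 p0 e0.
rewrite subrK in tK tM.
have rho01 : 0 < powR t kappa <= 1.
  by rewrite powR_gt0 //= -(powRr0 t); apply: ger_powR; rewrite ?t0 ?ltW.
apply: (approx_error_not_small f0 beta0 CS0 ups0 ups1 eta_holder eta_regular ord0
  kappa gamma CApp (powR t (beta * gamma)) (powR t kappa) (fine M) app (powR_gt0 _ t0) rho01 ME).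
- by rewrite approx_error_powR ?ltW // corner_mass_powR.
- by rewrite approx_error_powR ?ltW.
Qed.
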